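(* For every non-binary phylogenetic tree $T$ with $n$ leaves there exists a binary phylogenetic tree $T'$ with $n$ leaves such that $\Phi(T')>\Phi(T)$.
   Context: A phylogenetic tree with $n$ leaves is a rooted tree whose leaves are bijectively labeled by $\{1,\dots,n\}$, every internal node having at least two children; it is binary if every internal node has exactly two children. The depth $\delta_T(v)$ is the number of arcs from the root to $v$; for leaves $i,j$, $\varphi_T(i,j)=\delta_T(LCA_T(i,j))$ ($LCA$ = lowest common ancestor), and $\Phi(T)=\sum_{1\le i<j\le n}\varphi_T(i,j)$ is the total cophenetic index. *)

From mathcomp Require Import all_boot.
Set Implicit Arguments. Unset Strict Implicit. Unset Printing Implicit Defensive.

(* Rooted trees: a leaf carries a label, an internal node has an ordered
   list of children (the order is irrelevant for everything below). *)
Inductive tree : Type := Leaf of nat | Node of seq tree.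

Fixpoint leaves (t : tree) : seq nat :=
  match t with
  | Leaf a => [:: a]
  | Node ts => flatten (map leaves ts)
  end.

Fixpoint internal_ge2 (t : tree) : bool :=
  match t with
  | Leaf _ => true
  | Node ts => (1 < size ts) && all internal_ge2 ts
  end.

Fixpoint binary (t : tree) : bool :=
  match t with
  | Leaf _ => true
  | Node ts => (size ts == 2) && all binary ts
  end.

Definition phylo (n : nat) (t : tree) : bool :=
  internal_ge2 t && perm_eq (leaves t) (iota 1 n).

(* varphi_T(i,j) = depth of LCA_T(i,j): descend from the root into the
   (unique, labels being distinct) child containing both leaves i and j,
   counting arcs, until no child contains both. *)
Fixpoint lca_depth (t : tree) (i j : nat) : nat :=
  match t with
  | Leaf _ => 0
  | Node ts =>
      foldr (fun c acc =>
               if (i \in leaves c) && (j \in leaves c)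
               then (lca_depth c i j).+1 else acc) 0 ts
  end.

Definition Phi (n : nat) (t : tree) : nat :=
  \sum_(1 <= j < n.+1) \sum_(1 <= i < j) lca_depth t i j.

From mathcomp Require Import all_boot.
From mathcomp Require Import zify.
From Stdlib Require List.

Set Implicit Arguments. Unset Strict Implicit. Unset Printing Implicit Defensive.

(* The binarization [binarize] replaces, bottom-up, every internal node with
   children c_1, ..., c_k by the caterpillar
   Node [c_1; Node [c_2; ... Node [c_(k-1); c_k]]].  This keeps the leaf
   sequence and produces a binary tree.  Since every leaf pair that met below
   the original node still meets at least as deep, the depth of every lowest
   common ancestor can only grow ([lca_depth_binarize]).  It grows strictly for
   some pair of distinct leaves when the tree is not binary
   ([binarize_lca_depth_lt]): either some child is not binary (induction), or
   the root has at least three children, and then two leaves taken in the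
   second and third child meet at depth 0 before and at depth >= 1 after.
   Summing over all pairs ([Phi_lt]) gives the theorem. *)

Definition tree_nested_ind (P : tree -> Prop) (HL : forall a, P (Leaf a))
    (HN : forall ts, (forall t, List.In t ts -> P t) -> P (Node ts)) :
  forall t, P t :=
  fix F t := match t with
  | Leaf a => HL a
  | Node ts => HN ts ((fix G (ts : seq tree) : forall t, List.In t ts -> P t :=
        match ts with
        | nil => fun t H => False_ind _ H
        | cons x r => fun t H => match H with
                       | or_introl e => eq_ind x P (F x) t e
                       | or_intror H' => G r t H'
                       end
        end) ts)
  end.

Lemma In_all (T : Type) (p : pred T) (s : seq T) (x : T) :
  List.In x s -> all p s -> p x.
Proof. elim: s => //= a s IH [-> /andP[]//|Hx /andP[_ Hs]]; exact: IH. Qed.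

Lemma all_In (T : Type) (p q : pred T) (s : seq T) :
  (forall x, List.In x s -> p x -> q x) -> all p s -> all q s.
Proof.
elim: s => //= a s IH H /andP[pa ps]; rewrite H //=; last by left.
by apply: IH => // x Hx; apply: H; right.
Qed.

Lemma split_notall (T : Type) (p : pred T) (s : seq T) : ~~ all p s ->
  exists l1 c l2, s = l1 ++ c :: l2 /\ ~~ p c.
Proof.
elim: s => //= a s IH; case: (boolP (p a)) => pa /=.
  by move=> /IH [l1 [c [l2 [-> pc]]]]; exists (a :: l1), c, l2.
by move=> _; exists nil, a, s.
Qed.

Lemma uniq_catl_notin (T : eqType) (s1 s2 : seq T) (x : T) :
  uniq (s1 ++ s2) -> x \in s1 -> x \notin s2.
Proof.
rewrite cat_uniq => /and3P[_ /hasPn dis _] xs1; apply/negP => xs2.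
by move: (dis x xs2); rewrite xs1.
Qed.

Lemma uniq_catr_notin (T : eqType) (s1 s2 : seq T) (x : T) :
  uniq (s1 ++ s2) -> x \in s2 -> x \notin s1.
Proof. by rewrite uniq_catC; apply: uniq_catl_notin. Qed.

Fixpoint caterpillar (ts : seq tree) : tree :=
  match ts with
  | nil => Node nil
  | t :: r => if r is nil then t else Node [:: t; caterpillar r]
  end.

Fixpoint binarize (t : tree) : tree :=
  match t with
  | Leaf a => Leaf a
  | Node ts => caterpillar (map binarize ts)
  end.

Lemma binarize_Node (ts : seq tree) :
  binarize (Node ts) = caterpillar (map binarize ts).
Proof. by []. Qed.

Lemma leaves_caterpillar (ts : seq tree) :
  leaves (caterpillar ts) = flatten (map leaves ts).
Proof. by elim: ts => //= a [|b r] IH /=; rewrite cats0 // IH. Qed.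

Lemma leaves_binarize (t : tree) : leaves (binarize t) = leaves t.
Proof.
elim/tree_nested_ind: t => //= ts IH; rewrite leaves_caterpillar -map_comp.
by congr flatten; apply/List.map_ext_in => t /IH.
Qed.

Lemma leaves_map_binarize (ts : seq tree) :
  leaves (Node (map binarize ts)) = leaves (Node ts).
Proof. by rewrite /= -map_comp (eq_map leaves_binarize). Qed.

Lemma binary_caterpillar (ts : seq tree) :
  1 < size ts -> all binary ts -> binary (caterpillar ts).
Proof.
elim: ts => //= a [|b [|c r]] IH //= _ /andP[-> bin_r].
by move: (IH isT bin_r) => /= ->.
Qed.

Lemma binary_binarize (t : tree) : internal_ge2 t -> binary (binarize t).
Proof.
elim/tree_nested_ind: t => //= ts IH /andP[size_ts ge2_ts].
apply: binary_caterpillar; first by rewrite size_map.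
by rewrite all_map; apply: all_In ge2_ts.
Qed.

Lemma binary_internal_ge2 (t : tree) : binary t -> internal_ge2 t.
Proof.
elim/tree_nested_ind: t => //= ts IH /andP[/eqP -> bin_ts] /=.
exact: all_In bin_ts.
Qed.

Lemma phylo_binarize (n : nat) (t : tree) : phylo n t -> phylo n (binarize t).
Proof.
case/andP=> ge2_t perm_t.
by rewrite /phylo binary_internal_ge2 ?binary_binarize // leaves_binarize.
Qed.

Lemma internal_ge2_leaves (t : tree) : internal_ge2 t -> exists a, a \in leaves t.
Proof.
elim/tree_nested_ind: t => [a|[|c r] IH] //= ; first by exists a; rewrite inE.
case/andP=> _ /andP[ge2_c _]; have [a a_c] := IH c (or_introl erefl) ge2_c.
by exists a; rewrite mem_cat a_c.
Qed.

Lemma lca_depth_cons (c : tree) (ts : seq tree) (i j : nat) :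
  lca_depth (Node (c :: ts)) i j =
  if (i \in leaves c) && (j \in leaves c) then (lca_depth c i j).+1
  else lca_depth (Node ts) i j.
Proof. by []. Qed.

Lemma lca_depth_sym (t : tree) (i j : nat) : lca_depth t i j = lca_depth t j i.
Proof.
elim/tree_nested_ind: t => //= ts IH.
elim: ts IH => //= c ts IHts IH; rewrite andbC IH; last by left.
by rewrite IHts // => t Ht; apply: IH; right.
Qed.

Lemma lca_depth_cat (l1 l2 : seq tree) (i j : nat) :
  i \notin leaves (Node l1) ->
  lca_depth (Node (l1 ++ l2)) i j = lca_depth (Node l2) i j.
Proof.
elim: l1 => //= c l1 IH; rewrite mem_cat negb_or => /andP[i_c i_l1].
by rewrite (negbTE i_c) IH.
Qed.

Lemma uniq_leaves_child (l1 : seq tree) (c : tree) (l2 : seq tree) :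
  uniq (leaves (Node (l1 ++ c :: l2))) -> uniq (leaves c).
Proof. by rewrite /= map_cat flatten_cat /= !cat_uniq => /and3P[_ _ /and3P[]]. Qed.

Lemma lca_depth_child (l1 : seq tree) (c : tree) (l2 : seq tree) (i j : nat) :
  uniq (leaves (Node (l1 ++ c :: l2))) -> i \in leaves c -> j \in leaves c ->
  lca_depth (Node (l1 ++ c :: l2)) i j = (lca_depth c i j).+1.
Proof.
rewrite [leaves _]/= map_cat flatten_cat => uniq_ts i_c j_c.
rewrite lca_depth_cat ?lca_depth_cons ?i_c ?j_c //.
by apply: uniq_catr_notin uniq_ts _; rewrite /= mem_cat i_c.
Qed.

Lemma lca_depth_pos (ts : seq tree) (i j : nat) : 0 < lca_depth (Node ts) i j ->
  (i \in leaves (Node ts)) && (j \in leaves (Node ts)).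
Proof.
elim: ts => //= c ts IH; rewrite !mem_cat.
by case: ifP => [/andP[-> ->]//|_ /IH /andP[-> ->]]; rewrite !orbT.
Qed.

Lemma lca_depth_caterpillar (ts : seq tree) (i j : nat) : 1 < size ts ->
  lca_depth (Node ts) i j <= lca_depth (caterpillar ts) i j.
Proof.
elim: ts => // a [|b [|c r]] IH // _.
have le_rest := IH isT.
change (caterpillar _) with (Node [:: a; caterpillar [:: b, c & r]]).
rewrite (lca_depth_cons a) (lca_depth_cons a); case: ifP => // _.
case: (posnP (lca_depth (Node [:: b, c & r]) i j)) => [-> //|pos].
set cat := caterpillar [:: b, c & r].
have /andP[i_cat j_cat] : (i \in leaves cat) && (j \in leaves cat).
  by rewrite leaves_caterpillar; apply: (lca_depth_pos pos).
by rewrite [X in _ <= X]lca_depth_cons i_cat j_cat ltnW.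
Qed.

Lemma lca_depth_map (f : tree -> tree) (ts : seq tree) (i j : nat) :
  (forall t, leaves (f t) = leaves t) ->
  (forall t, List.In t ts -> lca_depth t i j <= lca_depth (f t) i j) ->
  lca_depth (Node ts) i j <= lca_depth (Node (map f ts)) i j.
Proof.
move=> leaves_f; elim: ts => //= c ts IH le_ts; rewrite leaves_f.
case: ifP => _; first by rewrite ltnS; apply: le_ts; left.
by apply: IH => t Ht; apply: le_ts; right.
Qed.

Lemma lca_depth_binarize (t : tree) (i j : nat) : internal_ge2 t ->
  lca_depth t i j <= lca_depth (binarize t) i j.
Proof.
elim/tree_nested_ind: t => //= ts IH /andP[size_ts ge2_ts].
apply: leq_trans (lca_depth_caterpillar _ _ _); last by rewrite size_map.
by apply: lca_depth_map leaves_binarize _ => t Ht; apply: IH (In_all Ht ge2_ts).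
Qed.

(* At a root with at least three children, two leaves taken in the second
   and third children meet at the root, but strictly below it after
   binarization, where the children other than the first are grouped. *)
Lemma binarize_root_lt (c0 c1 c2 : tree) (r : seq tree) :
  let t := Node [:: c0, c1, c2 & r] in
  internal_ge2 c1 -> internal_ge2 c2 -> uniq (leaves t) ->
  exists i j, [/\ i \in leaves t, j \in leaves t, i != j &
                  lca_depth t i j < lca_depth (binarize t) i j].
Proof.
move=> t ge2_c1 ge2_c2 uniq_t.
have [i i_c1] := internal_ge2_leaves ge2_c1.
have [j j_c2] := internal_ge2_leaves ge2_c2.
have uniq_c12 : uniq (leaves c1 ++ leaves (Node (c2 :: r))).
  by move: uniq_t; rewrite [leaves _]/= cat_uniq => /and3P[].
have i_c0 : i \notin leaves c0.
  by apply: uniq_catr_notin uniq_t _; rewrite /= mem_cat i_c1.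
have j_c1 : j \notin leaves c1.
  by apply: uniq_catr_notin uniq_c12 _; rewrite /= mem_cat j_c2.
have i_rest : i \notin leaves (Node (c2 :: r)) by apply: uniq_catl_notin uniq_c12 _.
exists i, j; split; rewrite ?[_ \in leaves t]/= ?mem_cat ?i_c1 ?j_c2 ?orbT //.
  by apply: contraNneq j_c1 => <-.
have -> : lca_depth t i j = 0.
  rewrite (lca_depth_cons c0) (negbTE i_c0) (lca_depth_cons c1) (negbTE j_c1).
  by rewrite andbF -[c2 :: r]cats0 lca_depth_cat.
change (binarize t) with
  (Node [:: binarize c0; caterpillar [:: binarize c1, binarize c2 & map binarize r]]).
rewrite lca_depth_cons leaves_binarize (negbTE i_c0) lca_depth_cons.
by rewrite leaves_caterpillar /= !leaves_binarize !mem_cat i_c1 j_c2 !orbT.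
Qed.

(* Below a non-binary child the gain obtained by induction persists, since
   the remaining children do not affect the LCA of two leaves of that child. *)
Lemma binarize_child_lt (l1 : seq tree) (c : tree) (l2 : seq tree) (i j : nat) :
  1 < size (l1 ++ c :: l2) -> uniq (leaves (Node (l1 ++ c :: l2))) ->
  i \in leaves c -> j \in leaves c ->
  lca_depth c i j < lca_depth (binarize c) i j ->
  lca_depth (Node (l1 ++ c :: l2)) i j < lca_depth (binarize (Node (l1 ++ c :: l2))) i j.
Proof.
move=> size_t uniq_t i_c j_c lt_c; rewrite binarize_Node.
apply: leq_trans (lca_depth_caterpillar _ _ _); last by rewrite size_map.
have uniq_bt : uniq (leaves (Node (map binarize l1 ++ binarize c :: map binarize l2))).
  by rewrite -map_cons -map_cat leaves_map_binarize.
rewrite map_cat [map _ (_ :: _)]/= (lca_depth_child uniq_bt) ?leaves_binarize //.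
by rewrite (lca_depth_child uniq_t).
Qed.

Lemma binarize_lca_depth_lt (t : tree) :
  internal_ge2 t -> uniq (leaves t) -> ~~ binary t ->
  exists i j, [/\ i \in leaves t, j \in leaves t, i != j &
                  lca_depth t i j < lca_depth (binarize t) i j].
Proof.
elim/tree_nested_ind: t => [//|ts IH] /andP[size_ts ge2_ts] uniq_ts.
rewrite [binary _]/= negb_and; case: (boolP (all binary ts)) => [_|]; last first.
  case/split_notall=> [l1 [c [l2 [def_ts nbin_c]]]] _.
  have In_c : List.In c ts by rewrite def_ts; apply/List.in_or_app; right; left.
  have uniq_c : uniq (leaves c) by apply: (@uniq_leaves_child l1 c l2); rewrite -def_ts.
  have [i [j [i_c j_c ij lt_c]]] := IH c In_c (In_all In_c ge2_ts) uniq_c nbin_c.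
  have leaves_c : forall k, k \in leaves c -> k \in leaves (Node ts).
    by move=> k k_c; rewrite def_ts /= map_cat flatten_cat /= !mem_cat k_c orbT.
  exists i, j; split; rewrite ?leaves_c //; rewrite def_ts in size_ts uniq_ts *.
  exact: binarize_child_lt.
rewrite orbF; case: ts IH size_ts ge2_ts uniq_ts => [|c0 [|c1 [|c2 r]]] // _ _.
by case/and4P=> _ ge2_c1 ge2_c2 _ uniq_ts _; apply: binarize_root_lt.
Qed.

Lemma sum_nat_lt (F G : nat -> nat) (m k n : nat) : m <= k < n ->
  (forall x, F x <= G x) -> F k < G k ->
  \sum_(m <= x < n) F x < \sum_(m <= x < n) G x.
Proof.
case/andP=> le_mk lt_kn le_FG lt_k.
rewrite !(big_cat_nat le_mk (ltnW lt_kn)) !(big_ltn lt_kn) /=.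
rewrite -addnS leq_add ?leq_sum // -addSn leq_add ?leq_sum //.
Qed.

Lemma Phi_lt (n : nat) (t t' : tree) (i j : nat) :
  i \in iota 1 n -> j \in iota 1 n -> i != j ->
  (forall a b, lca_depth t a b <= lca_depth t' a b) ->
  lca_depth t i j < lca_depth t' i j -> Phi n t < Phi n t'.
Proof.
wlog lt_ij : i j / i < j => [wlog_lt|].
  move=> i_n j_n ij le_t lt_t; case: (ltngtP i j) => [lt_ij|lt_ji|eq_ij].
  - exact: (wlog_lt i j).
  - by apply: (wlog_lt j i); rewrite // 1?eq_sym // lca_depth_sym (lca_depth_sym t').
  - by rewrite eq_ij eqxx in ij.
rewrite !mem_iota => i_n j_n _ le_t lt_t.
apply: (sum_nat_lt (k := j)) => [|x|]; first by lia.
  exact: leq_sum.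
by apply: (sum_nat_lt (k := i)) => //; lia.
Qed.

Theorem mainTheorem5 (n : nat) (T : tree) :
  phylo n T -> ~~ binary T ->
  exists T' : tree, [/\ phylo n T', binary T' & Phi n T < Phi n T'].
Proof.
move=> phylo_T nbin_T; have /andP[ge2_T perm_T] := phylo_T.
have uniq_T : uniq (leaves T) by rewrite (perm_uniq perm_T) iota_uniq.
have [i [j [i_T j_T ij lt_ij]]] := binarize_lca_depth_lt ge2_T uniq_T nbin_T.
exists (binarize T); split; first exact: phylo_binarize.
  exact: binary_binarize.
apply: (Phi_lt (i := i) (j := j)) => //; first by rewrite -(perm_mem perm_T).
  by rewrite -(perm_mem perm_T).
by move=> a b; apply: lca_depth_binarize.
Qed.
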